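(* Fix an integer $d\ge1$. For every $l>0$ there is a constant $C(l)>0$, depending only on $l$ and $d$ and not on $n$, such that for every $x\in\mathbb{R}^n$ whose Euclidean distance to each of the three points $0$, $e_1$, and $-\cos(g^{\circ d}(\pi))\,e_1$ is at least $l$, and at which $L$ is differentiable, $\|\nabla L(x)\|\ge C(l)$.
   Context: $e_1=(1,0,\dots,0)\in\mathbb{R}^n$; for $x\neq0$, $\theta(x)\in[0,\pi]$ is the angle between $x$ and $e_1$. $g(\theta)=\arccos\big(\frac{(\pi-\theta)\cos\theta+\sin\theta}{\pi}\big)$, $g^{\circ d}$ its $d$-fold composition. $L(x)=\frac12\|x\|^2-\|x\|\cos\big(g^{\circ d}(\theta(x))\big)+\frac12$. *)

From HB Require Import structures.
From mathcomp Require Import all_boot all_order all_algebra.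
From mathcomp Require Import all_classical all_reals all_analysis.
Set Implicit Arguments. Unset Strict Implicit. Unset Printing Implicit Defensive.
Import Order.TTheory GRing.Theory Num.Theory.
Import numFieldNormedType.Exports.
Local Open Scope ring_scope.

Section Defs.
Variable R : realType.

Definition edot (n : nat) (u v : 'rV[R]_n) : R := \sum_(i < n) u ord0 i * v ord0 i.
Definition enorm (n : nat) (u : 'rV[R]_n) : R := Num.sqrt (edot u u).

Definition basis_e1 (n : nat) : 'rV[R]_n := \row_(i < n) (if (i : nat) == 0%N then 1 else 0).

Definition theta_e1 (n : nat) (x : 'rV[R]_n) : R := acos (edot x (basis_e1 n) / enorm x).

Definition gpaper (t : R) : R := acos (((pi - t) * cos t + sin t) / pi).

Definition Lpaper (d n : nat) (x : 'rV[R]_n) : R :=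
  2^-1 * enorm x ^+ 2 - enorm x * cos (iter d gpaper (theta_e1 x)) + 2^-1.

Definition gradient_vec (n : nat) (f : 'rV[R]_n -> R) (x : 'rV[R]_n) : 'rV[R]_n :=
  \row_(i < n) ('d f x (delta_mx ord0 i : 'rV[R]_n)).
End Defs.

From HB Require Import structures.
From mathcomp Require Import all_boot all_order all_algebra.
From mathcomp Require Import all_classical all_reals all_analysis.
From mathcomp Require Import ring lra.
Import Order.TTheory GRing.Theory Num.Theory.
Import numFieldNormedType.Exports.
Local Open Scope ring_scope.
Set Implicit Arguments. Unset Strict Implicit. Unset Printing Implicit Defensive.

(* In polar coordinates r = |x|, t = theta(x), L = r^2/2 - r cos (g^d t) + 1/2.  The
   gradient dominates the radial derivative |r - cos (g^d t)| (move along the ray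
   through x) and the angular slope of t |-> - cos (g^d t) (rotate x towards -e1).
   For r >= 2 the radial term is at least 1.  For t near 0, keeping away from e1
   forces |r - 1| >= l/2 while cos (g^d t) is close to 1; for t near pi the point
   -cos (g^d pi) e1 plays the same role, cos o g^d being Lipschitz there.  For t in
   the remaining compact subinterval of (0, pi), the mean value theorem bounds the
   slopes of g and of cos o g from below, so the angular term is bounded below. *)

Section SlopeFromDerivative.
Variables (R : realType) (f df : R -> R).
Hypothesis f_df : forall x : R, is_derive x (1 : R) f (df x).

Let f_cont a b : {within `[a, b], continuous f}%classic.
Proof.
apply: continuous_subspaceT => x; apply/differentiable_continuous/derivable1_diffP.
exact: ex_derive.
Qed.

Lemma derive_ge_slope k a b : a <= b -> (forall c, a <= c <= b -> k <= df c) ->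
  k * (b - a) <= f b - f a.
Proof.
move=> ab kdf; have [c] := MVT_segment ab (fun x _ => f_df x) (@f_cont a b).
rewrite in_itv /= => /kdf kc ->; apply: ler_wpM2r => //; lra.
Qed.

Lemma derive_le_slope k a b : a <= b -> (forall c, a <= c <= b -> df c <= k) ->
  f b - f a <= k * (b - a).
Proof.
move=> ab kdf; have [c] := MVT_segment ab (fun x _ => f_df x) (@f_cont a b).
rewrite in_itv /= => /kdf kc ->; apply: ler_wpM2r => //; lra.
Qed.

Lemma derive_lt_slope k a b : a < b -> (forall c, a < c < b -> df c < k) ->
  f b - f a < k * (b - a).
Proof.
move=> ab kdf; have [c] := MVT ab (fun x _ => f_df x) (@f_cont a b).
rewrite in_itv /= => /kdf kc ->; rewrite ltr_pM2r //; lra.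
Qed.
End SlopeFromDerivative.

Section Trigonometry.
Variable R : realType.
Implicit Types a b c m t : R.

Lemma sin_le_pihalf a b : 0 <= a -> a <= b -> b <= pi / 2 -> sin a <= sin b.
Proof.
move=> a0 ab bpi; have pi2 : 0 < pi / 2 :> R by rewrite divr_gt0 ?pi_gt0.
rewrite leNgt ltr_sin ?in_itv /= -?leNgt //; apply/andP; split; lra.
Qed.

Lemma sin_ge_min m b c : 0 <= m -> m <= c -> c <= b -> b <= pi ->
  Num.min (sin m) (sin b) <= sin c.
Proof.
move=> m0 mc cb bpi; rewrite ge_min.
have [cpi|cpi] := lerP c (pi / 2); first by rewrite sin_le_pihalf.
have sinB_pi (x : R) : sin (pi - x) = sin x.
  by rewrite sinB sinpi cospi mul0r mulN1r opprK add0r.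
rewrite -(sinB_pi c) -(sinB_pi b); apply/orP; right; apply: sin_le_pihalf; lra.
Qed.

Lemma cos_nincr a b : 0 <= a -> a <= b -> b <= pi -> cos b <= cos a.
Proof.
move=> a0 ab bpi; rewrite leNgt ltr_cos ?in_itv /= -?leNgt //; apply/andP; split; lra.
Qed.

Lemma cos_sub_le a b : a <= b -> cos a - cos b <= b - a.
Proof.
move=> ab; suff : -1 * (b - a) <= cos b - cos a by lra.
apply: (derive_ge_slope (fun x => is_derive_cos x)) => // c _.
by rewrite lerN2 sin_le1.
Qed.

Lemma cos_sub_ge p a b : 0 <= p -> p <= a -> a <= b -> b <= pi / 2 ->
  sin p * (b - a) <= cos a - cos b.
Proof.
move=> p0 pa ab bpi; suff : - sin p * (b - a) >= cos b - cos a by lra.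
apply: (derive_le_slope (fun x => is_derive_cos x)) => // c /andP[ac cb].
by rewrite lerN2 sin_le_pihalf //; lra.
Qed.
End Trigonometry.

Section CosOfG.
Variable R : realType.
Implicit Types a b c m t : R.

Definition cosg t : R := ((pi - t) * cos t + sin t) / pi.

Lemma is_derive_cosg t : is_derive t 1 cosg (- ((pi - t) * sin t) / pi).
Proof. by apply: trigger_derive; rewrite /GRing.scale /=; ring. Qed.

Let pi_gt0 : 0 < pi :> R. Proof. exact: pi_gt0. Qed.

Lemma cosg0 : cosg 0 = 1.
Proof. by rewrite /cosg cos0 sin0 subr0 mulr1 addr0 divff // gt_eqF. Qed.

Lemma cosgpi : cosg pi = 0.
Proof. by rewrite /cosg subrr mul0r sinpi addr0 mul0r. Qed.

Lemma cosg_sub_le a b : 0 <= a -> a <= b -> b <= pi -> 0 <= cosg a - cosg b <= b - a.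
Proof.
move=> a0 ab bpi; suff : -1 * (b - a) <= cosg b - cosg a <= 0 * (b - a) by lra.
apply/andP; split.
  apply: (derive_ge_slope is_derive_cosg) => // c /andP[ac cb].
  rewrite mulNr lerN2 ler_pdivrMr // mul1r.
  have s0 : 0 <= sin c by apply: sin_ge0_pi; apply/andP; split; lra.
  by rewrite -[leRHS]mulr1 ler_pM ?sin_le1 //; lra.
apply: (derive_le_slope is_derive_cosg) => // c /andP[ac cb].
rewrite mulNr oppr_le0 divr_ge0 ?mulr_ge0 ?sin_ge0_pi //; lra.
Qed.

Lemma cosg_ge0 t : 0 <= t -> t <= pi -> 0 <= cosg t.
Proof. by move=> t0 tpi; have := cosg_sub_le t0 tpi (lexx pi); rewrite cosgpi; lra. Qed.

Lemma cosg_le1 t : 0 <= t -> t <= pi -> cosg t <= 1.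
Proof. by move=> t0 tpi; have := cosg_sub_le (lexx 0) t0 tpi; rewrite cosg0; lra. Qed.

Lemma cosg_lt1 t : 0 < t -> t <= pi -> cosg t < 1.
Proof.
move=> t0 tpi; rewrite -cosg0 -subr_lt0.
apply: (lt_le_trans (derive_lt_slope is_derive_cosg (k := 0) t0 _)); last by rewrite mul0r.
move=> c /andP[c0 ct].
rewrite mulNr oppr_lt0 divr_gt0 ?mulr_gt0 ?sin_gt0_pi ?c0 //; lra.
Qed.

Lemma cos_le_cosg t : 0 <= t -> t <= pi -> cos t <= cosg t.
Proof.
move=> t0 tpi; rewrite ler_pdivlMr //.
(* [pi * (cosg t - cos t) = sin t - t cos t] vanishes at 0 and is nondecreasing on [0, pi]. *)
have gapD (x : R) : is_derive x 1 (fun c => sin c - c * cos c) (x * sin x).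
  by apply: trigger_derive; rewrite /GRing.scale /=; ring.
have := derive_ge_slope gapD (k := 0) t0; rewrite mul0r sin0 mul0r !subr0.
suff /[swap]/[apply] : forall c, 0 <= c <= t -> 0 <= c * sin c by lra.
by move=> c /andP[c0 ct]; rewrite mulr_ge0 ?sin_ge0_pi ?c0 //; lra.
Qed.

Definition cosg_rate m b : R := (pi - b) * Num.min (sin m) (sin b) / pi.

Lemma cosg_rate_ge0 m b : 0 <= m -> m <= pi -> 0 <= b -> b <= pi -> 0 <= cosg_rate m b.
Proof.
move=> m0 mpi b0 bpi; rewrite /cosg_rate divr_ge0 ?pi_ge0 // mulr_ge0 ?subr_ge0 //.
by rewrite le_min !sin_ge0_pi ?m0 ?b0.
Qed.

Lemma cosg_rate_gt0 m b : 0 < m -> m < pi -> 0 < b -> b < pi -> 0 < cosg_rate m b.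
Proof.
move=> m0 mpi b0 bpi; rewrite /cosg_rate !mulr_gt0 ?invr_gt0 ?subr_gt0 //.
by rewrite lt_min !sin_gt0_pi ?m0 ?b0 ?mpi ?bpi.
Qed.

Lemma cosg_sub_ge m bb a b : 0 < m -> m <= a -> a <= b -> b <= bb -> bb < pi ->
  cosg_rate m bb * (b - a) <= cosg a - cosg b.
Proof.
move=> m0 ma ab bbb bbpi.
suff : cosg b - cosg a <= - cosg_rate m bb * (b - a) by rewrite mulNr; lra.
apply: (derive_le_slope is_derive_cosg) => // c /andP[ac cb].
rewrite /cosg_rate !mulNr lerN2; apply: ler_wpM2r; first by rewrite invr_ge0 pi_ge0.
have min_ge0 : 0 <= Num.min (sin m) (sin bb).
  by rewrite le_min !sin_ge0_pi //; apply/andP; split; lra.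
by apply: ler_pM; rewrite ?sin_ge_min //; lra.
Qed.
End CosOfG.

Section GPaper.
Variable R : realType.
Implicit Types a b m t u v : R.

Lemma acos_nincr u v : -1 <= u -> u <= v -> v <= 1 -> acos v <= acos u.
Proof.
move=> u1 uv v1.
have [ui vi] : -1 <= u <= 1 /\ -1 <= v <= 1 by split; apply/andP; split; lra.
have acos_itv (w : R) : -1 <= w <= 1 -> acos w \in `[0, pi].
  by move=> w1; rewrite in_itv /= acos_ge0 ?acos_lepi.
rewrite leNgt -(ltr_cos (acos_itv _ ui) (acos_itv _ vi)).
by rewrite !acosK ?in_itv //= -leNgt.
Qed.

Lemma gpaperE t : gpaper t = acos (cosg t). Proof. by []. Qed.

Section OnZeroPi.
Variable t : R.
Hypotheses (t_ge0 : 0 <= t) (t_lepi : t <= pi).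

Let cosg_itv : -1 <= cosg t <= 1.
Proof. by rewrite cosg_le1 // (le_trans _ (cosg_ge0 _ _)) ?lerN10. Qed.

Lemma cos_gpaper : cos (gpaper t) = cosg t.
Proof. by rewrite acosK // in_itv /= cosg_itv. Qed.

Lemma gpaper_ge0 : 0 <= gpaper t.
Proof. exact: acos_ge0. Qed.

Lemma gpaper_le_pihalf : gpaper t <= pi / 2.
Proof. by rewrite -acos0 acos_nincr ?cosg_ge0 ?cosg_le1 ?lerN10. Qed.

Lemma gpaper_le : gpaper t <= t.
Proof.
rewrite -[leRHS]cosK ?in_itv /= ?t_ge0 ?t_lepi //.
by rewrite acos_nincr ?cos_geN1 ?cos_le_cosg ?cosg_le1.
Qed.
End OnZeroPi.

Lemma gpaper_gt0 t : 0 < t -> t <= pi -> 0 < gpaper t.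
Proof.
move=> t0 tpi; rewrite gpaperE acos_gt0 // cosg_lt1 // andbT.
by have := cosg_ge0 (ltW t0) tpi; lra.
Qed.

Lemma gpaper_ndecr a b : 0 <= a -> a <= b -> b <= pi -> gpaper a <= gpaper b.
Proof.
move=> a0 ab bpi; have [cosg_ab _] := andP (cosg_sub_le a0 ab bpi).
have := cosg_ge0 (le_trans a0 ab) bpi; have := cosg_le1 a0 (le_trans ab bpi).
by rewrite !gpaperE; move=> *; apply: acos_nincr; lra.
Qed.

Lemma gpaper_sub_ge m bb a b : 0 < m -> m <= a -> a <= b -> b <= bb -> bb < pi ->
  cosg_rate m bb * (b - a) <= gpaper b - gpaper a.
Proof.
move=> m0 ma ab bbb bbpi; apply: (le_trans (cosg_sub_ge m0 ma ab bbb bbpi)).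
rewrite -!cos_gpaper; try lra.
by apply: cos_sub_le; apply: gpaper_ndecr; lra.
Qed.

Lemma sin_gpaper_gt0 t : 0 < t -> t <= pi -> 0 < sin (gpaper t).
Proof.
move=> t0 tpi; rewrite sin_gt0_pi // gpaper_gt0 //=.
by rewrite (le_lt_trans (gpaper_le_pihalf _ _)) //; lra.
Qed.

Lemma gpaper_sub_le m a b : 0 < m -> m <= a -> a <= b -> b <= pi ->
  gpaper b - gpaper a <= (sin (gpaper m))^-1 * (b - a).
Proof.
move=> m0 ma ab bpi.
have sin_gt0 : 0 < sin (gpaper m) by apply: sin_gpaper_gt0; lra.
have a0 : 0 <= a by lra.
have [_ cosg_ab] := andP (cosg_sub_le a0 ab bpi).
rewrite ler_pdivlMl //; apply: le_trans cosg_ab.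
rewrite -!cos_gpaper; try lra.
by apply: cos_sub_ge; rewrite ?gpaper_ge0 ?gpaper_le_pihalf ?gpaper_ndecr //; lra.
Qed.
End GPaper.

Section IterSlope.
Variables (R : realFieldType) (f : R -> R) (lo hi : R).

Definition iter_window k a b := forall j, (j < k)%N ->
  [/\ lo <= iter j f a, iter j f a <= iter j f b & iter j f b <= hi].

Lemma iter_sub_ge c k a b : 0 <= c ->
  (forall u v, lo <= u -> u <= v -> v <= hi -> c * (v - u) <= f v - f u) ->
  iter_window k a b -> c ^+ k * (b - a) <= iter k f b - iter k f a.
Proof.
move=> c0 f_ge; elim: k => [|k IHk] win; first by rewrite expr0 mul1r.
have [lo_a ab b_hi] := win k (ltnSn k).
apply: le_trans (f_ge _ _ lo_a ab b_hi); rewrite exprS -mulrA ler_wpM2l //.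
by apply: IHk => j jk; apply: win; apply: ltnW.
Qed.

Lemma iter_sub_le C k a b : 0 <= C ->
  (forall u v, lo <= u -> u <= v -> v <= hi -> f v - f u <= C * (v - u)) ->
  iter_window k a b -> iter k f b - iter k f a <= C ^+ k * (b - a).
Proof.
move=> C0 f_le; elim: k => [|k IHk] win; first by rewrite expr0 mul1r.
have [lo_a ab b_hi] := win k (ltnSn k).
apply: le_trans (f_le _ _ lo_a ab b_hi) _; rewrite exprS -mulrA ler_wpM2l //.
by apply: IHk => j jk; apply: win; apply: ltnW.
Qed.
End IterSlope.

Section IterGPaper.
Variable R : realType.
Implicit Types a b t : R.

Lemma iter_gpaper_range k t : 0 <= t -> t <= pi ->
  0 <= iter k (@gpaper R) t /\ iter k (@gpaper R) t <= t.
Proof.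
move=> t0 tpi; elim: k => [|k [IH0 IHt]] /=; first by split; lra.
have tk_pi : iter k (@gpaper R) t <= pi by lra.
by split; [apply: gpaper_ge0 | apply: le_trans (gpaper_le IH0 tk_pi) IHt].
Qed.

Lemma iter_gpaper_gt0 k t : 0 < t -> t <= pi -> 0 < iter k (@gpaper R) t.
Proof.
move=> t0 tpi; elim: k => [|k IHk] //=.
by have [_ ?] := iter_gpaper_range k (ltW t0) tpi; apply: gpaper_gt0; lra.
Qed.

Lemma iter_gpaper_le_pihalf k t : (0 < k)%N -> 0 <= t -> t <= pi ->
  iter k (@gpaper R) t <= pi / 2.
Proof.
case: k => [//|k] _ t0 tpi; have [? ?] := iter_gpaper_range k t0 tpi.
by rewrite iterS; apply: gpaper_le_pihalf; lra.
Qed.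

Lemma iter_gpaper_ndecr k a b : 0 <= a -> a <= b -> b <= pi ->
  iter k (@gpaper R) a <= iter k (@gpaper R) b.
Proof.
move=> a0 ab bpi; elim: k => [|k IHk] //=.
have [? ?] := iter_gpaper_range k a0 (le_trans ab bpi).
have [? ?] := iter_gpaper_range k (le_trans a0 ab) bpi.
by apply: gpaper_ndecr; lra.
Qed.

Lemma iter_gpaper_nincr k j t : 0 <= t -> t <= pi -> (k <= j)%N ->
  iter j (@gpaper R) t <= iter k (@gpaper R) t.
Proof.
move=> t0 tpi /subnK <-; elim: (j - k)%N => [|i IHi] //=.
have [? ?] := iter_gpaper_range (i + k) t0 tpi.
by apply: le_trans (gpaper_le _ _) IHi; lra.
Qed.

Lemma iter_gpaper_window K a t t' : 0 < a -> a <= t -> t <= t' -> t' <= pi ->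
  iter_window (@gpaper R) (iter K (@gpaper R) a) t' K.+1 t t'.
Proof.
move=> a0 at_ tt' t'pi j; rewrite ltnS => jK; split.
- apply: le_trans (iter_gpaper_nincr _ _ jK) (iter_gpaper_ndecr _ _ _ _); lra.
- by apply: iter_gpaper_ndecr; lra.
- by have [] := iter_gpaper_range j (ltac:(lra) : 0 <= t') t'pi.
Qed.

Lemma cos_iter_gpaper k t : 0 <= t -> t <= pi ->
  cos (iter k.+1 (@gpaper R) t) = cosg (iter k (@gpaper R) t).
Proof.
move=> t0 tpi; have [? ?] := iter_gpaper_range k t0 tpi.
by rewrite iterS cos_gpaper //; lra.
Qed.
End IterGPaper.

Section CosIterGPaper.
Variables (R : realType) (d : nat) (a : R).
Hypotheses (a_gt0 : 0 < a) (a_lepi : a <= pi).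
Let m := iter d (@gpaper R) a.

Let m_range : 0 < m /\ m <= a.
Proof.
split; first exact: iter_gpaper_gt0.
by have [] := iter_gpaper_range d (ltW a_gt0) a_lepi.
Qed.

Lemma cos_iter_gpaper_sub_ge bb t t' : a <= t -> t <= t' -> t' <= bb -> bb < pi ->
  cosg_rate m bb ^+ d.+1 * (t' - t) <=
  cos (iter d.+1 (@gpaper R) t) - cos (iter d.+1 (@gpaper R) t').
Proof.
move=> at_ tt' t'bb bbpi; have [m0 ma] := m_range.
have win := iter_gpaper_window (K := d) a_gt0 at_ tt' (ltac:(lra) : t' <= pi).
have [m_t t_t' t'_t'] := win d (ltnSn d).
have c0 : 0 <= cosg_rate m bb by apply: cosg_rate_ge0; lra.
have [t0 t'pi] : 0 <= t /\ t' <= pi by split; lra.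
rewrite !cos_iter_gpaper ?(le_trans t0 tt') ?(le_trans tt' t'pi) //.
have t'd_bb : iter d (@gpaper R) t' <= bb by apply: le_trans t'bb.
apply: le_trans (cosg_sub_ge m0 m_t t_t' t'd_bb bbpi).
rewrite exprS -mulrA ler_wpM2l //.
apply: (@iter_sub_ge R (@gpaper R) m t' _ d t t' c0) => [u v mu uv vt'|j jd].
  by apply: gpaper_sub_ge; lra.
by apply: win; apply: ltnW.
Qed.

Lemma cos_iter_gpaper_sub_le t t' : a <= t -> t <= t' -> t' <= pi ->
  cos (iter d.+1 (@gpaper R) t) - cos (iter d.+1 (@gpaper R) t') <=
  (sin (gpaper m))^-1 ^+ d * (t' - t).
Proof.
move=> at_ tt' t'pi; have [m0 ma] := m_range.
have win := iter_gpaper_window (K := d) a_gt0 at_ tt' t'pi.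
have [m_t t_t' t'_t'] := win d (ltnSn d).
have M0 : 0 <= (sin (gpaper m))^-1.
  by rewrite invr_ge0 ltW // sin_gpaper_gt0 //; lra.
have t0 : 0 <= t by lra.
rewrite !cos_iter_gpaper ?(le_trans t0 tt') ?(le_trans tt' t'pi) //.
have td0 : 0 <= iter d (@gpaper R) t := le_trans (ltW m0) m_t.
have [_ cosg_le] := andP (cosg_sub_le td0 t_t' (le_trans t'_t' t'pi)).
apply: le_trans cosg_le _.
apply: (@iter_sub_le R (@gpaper R) m t' _ d t t' M0) => [u v mu uv vt'|j jd].
  by apply: gpaper_sub_le; lra.
by apply: win; apply: ltnW.
Qed.
End CosIterGPaper.

Section Euclidean.
Variables (R : realType) (n : nat).
Implicit Types (u v w x : 'rV[R]_n) (a : R).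

Lemma edotC u v : edot u v = edot v u.
Proof. by apply: eq_bigr => i _; rewrite mulrC. Qed.

Lemma edotDl u v w : edot (u + v) w = edot u w + edot v w.
Proof. by rewrite /edot -big_split; apply: eq_bigr => i _; rewrite mxE mulrDl. Qed.

Lemma edotZl a u v : edot (a *: u) v = a * edot u v.
Proof. by rewrite /edot mulr_sumr; apply: eq_bigr => i _; rewrite mxE mulrA. Qed.

Lemma edotNl u v : edot (- u) v = - edot u v.
Proof. by rewrite -scaleN1r edotZl mulN1r. Qed.

Lemma edotDr u v w : edot w (u + v) = edot w u + edot w v.
Proof. by rewrite edotC edotDl !(edotC w). Qed.

Lemma edotZr a u v : edot v (a *: u) = a * edot v u.
Proof. by rewrite edotC edotZl edotC. Qed.

Lemma edotNr u v : edot v (- u) = - edot v u.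
Proof. by rewrite edotC edotNl edotC. Qed.

Lemma edotBl u v w : edot (u - v) w = edot u w - edot v w.
Proof. by rewrite edotDl edotNl. Qed.

Lemma edotBr u v w : edot w (u - v) = edot w u - edot w v.
Proof. by rewrite edotDr edotNr. Qed.

Lemma edotxx_ge0 u : 0 <= edot u u.
Proof. by apply: sumr_ge0 => i _; rewrite -expr2 sqr_ge0. Qed.

Lemma edot_eq0_of_xx_eq0 u v : edot u u = 0 -> edot u v = 0.
Proof.
move=> /eqP; rewrite /edot psumr_eq0 => [/allP u0|i _]; last by rewrite -expr2 sqr_ge0.
rewrite big1 // => i _; have /implyP/(_ isT) := u0 i (mem_index_enum i).
by rewrite mulf_eq0 orbb => /eqP ->; rewrite mul0r.
Qed.

Lemma enorm_ge0 u : 0 <= enorm u.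
Proof. exact: sqrtr_ge0. Qed.

Lemma enorm_sqr u : enorm u ^+ 2 = edot u u.
Proof. by rewrite sqr_sqrtr // edotxx_ge0. Qed.

Lemma enormZ a u : 0 <= a -> enorm (a *: u) = a * enorm u.
Proof.
move=> a0; rewrite /enorm edotZl edotZr mulrA -expr2 sqrtrM ?sqr_ge0 //.
by rewrite sqrtr_sqr ger0_norm.
Qed.

Lemma enormN u : enorm (- u) = enorm u.
Proof. by rewrite /enorm edotNl edotNr opprK. Qed.

Lemma edot_cauchy_schwarz u v : `|edot u v| <= enorm u * enorm v.
Proof.
have sqr_le : edot u v ^+ 2 <= edot u u * edot v v.
  have [vv0|vv_neq0] := eqVneq (edot v v) 0.
    by rewrite edotC (edot_eq0_of_xx_eq0 _ vv0) vv0 expr0n mulr0.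
  have vv_gt0 : 0 < edot v v by rewrite lt_def vv_neq0 edotxx_ge0.
  have := edotxx_ge0 (edot v v *: u - edot u v *: v).
  rewrite !edotBl !edotBr !edotZl !edotZr (edotC v u) => h.
  have : 0 <= edot v v * (edot u u * edot v v - edot u v ^+ 2) by lra.
  by rewrite pmulr_rge0 // subr_ge0.
by rewrite /enorm -sqrtrM ?edotxx_ge0 // -sqrtr_sqr ler_sqrt // mulr_ge0 ?edotxx_ge0.
Qed.

Lemma diff_edot_gradient (f : 'rV[R]_n -> R) x v :
  'd f x v = edot (gradient_vec f x) v.
Proof.
rewrite {1}(row_sum_delta v) linear_sum; apply: eq_bigr => i _.
by rewrite linearZ /= mxE mulrC.
Qed.

Lemma diff_le_gradient (f : 'rV[R]_n -> R) x v :
  'd f x v <= enorm (gradient_vec f x) * enorm v.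
Proof.
by rewrite diff_edot_gradient; apply: le_trans (ler_norm _) (edot_cauchy_schwarz _ _).
Qed.
End Euclidean.

Section AngleToE1.
Variables (R : realType) (n : nat).
Hypothesis n_gt0 : (0 < n)%N.
Implicit Types (x : 'rV[R]_n) (c : R).
Local Notation e1 := (basis_e1 R n).

Lemma edot_basis_e1 : edot e1 e1 = 1.
Proof.
case: n n_gt0 => [//|n'] _; rewrite /edot big_ord_recl !mxE /= mulr1 big1 ?addr0 //.
by move=> i _; rewrite !mxE mul0r.
Qed.

Section NonZero.
Variable x : 'rV[R]_n.
Hypothesis x_gt0 : 0 < enorm x.

Let cos_itv : -1 <= edot x e1 / enorm x <= 1.
Proof.
rewrite -ler_norml normrM normfV (gtr0_norm x_gt0) ler_pdivrMr // mul1r.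
have := edot_cauchy_schwarz x e1.
by rewrite [enorm e1]/enorm edot_basis_e1 sqrtr1 mulr1.
Qed.

Lemma theta_e1_ge0 : 0 <= theta_e1 x.
Proof. exact: acos_ge0. Qed.

Lemma theta_e1_lepi : theta_e1 x <= pi.
Proof. exact: acos_lepi. Qed.

Lemma edot_e1_cos : edot x e1 = enorm x * cos (theta_e1 x).
Proof. by rewrite /theta_e1 acosK ?in_itv //= mulrC divfK ?gt_eqF. Qed.

Lemma enorm_subZ_e1_sqr c : enorm (x - c *: e1) ^+ 2 =
  enorm x ^+ 2 - 2 * c * (enorm x * cos (theta_e1 x)) + c ^+ 2.
Proof.
rewrite !enorm_sqr edotBl !edotBr !edotZl !edotZr edot_basis_e1 (edotC e1 x).
by rewrite edot_e1_cos; ring.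
Qed.
End NonZero.
End AngleToE1.

Section DirectionalBounds.
Variable R : realType.
Local Open Scope classical_set_scope.

Lemma diff_ge_right_quotient (V : normedModType R) (f : V -> R) (x v : V) (c : R) :
  differentiable f x ->
  (\forall h \near at_right (0 : R), c <= h^-1 * (f (h *: v + x) - f x)) ->
  c <= 'd f x v.
Proof.
move=> df c_le; rewrite -deriveE //.
have dv : derivable f x v by apply: diff_derivable.
set Q := fun h : R => h^-1 *: ((f \o shift x) (h *: v) - f x).
have Q_cvg : Q @ at_right (0 : R) --> lim (Q @ (0 : R)^').
  move=> A /dv /nbhs_ballP [_ /posnumP[e] xe_A].
  by exists e%:num => //= y xe_y /gt_eqF/negbT/xe_A; exact.
exact: cvgr_to_ge Q_cvg c_le.
Qed.

Lemma rotation_curve_diff (V : normedModType R) (x u : V) :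
  let c := (fun s : R => cos s *: x) + (fun s : R => sin s *: u) in
  differentiable c 0 /\ 'd c 0 1 = u.
Proof.
move=> c.
have dcos : differentiable (@cos R) 0 by apply/derivable1_diffP; exact: derivable_cos.
have dsin : differentiable (@sin R) 0 by apply/derivable1_diffP; exact: derivable_sin.
have dcosx : differentiable (fun s : R => cos s *: x) 0 by exact: differentiableZl.
have dsinu : differentiable (fun s : R => sin s *: u) 0 by exact: differentiableZl.
have dcos0 : 'd (@cos R) 0 1 = 0.
  by rewrite -deriveE // (@derive_val _ _ _ _ _ _ _ (is_derive_cos (0 : R))) sin0 oppr0.
have dsin0 : 'd (@sin R) 0 1 = 1.
  by rewrite -deriveE // (@derive_val _ _ _ _ _ _ _ (is_derive_sin (0 : R))) cos0.
split; first exact: differentiableD.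
rewrite /c diffD //; rewrite [LHS]/=.
have -> : 'd (fun s : R => cos s *: x) 0 1 = 0.
  by rewrite (congr1 (fun F => F 1) (diffZl x dcos)) /= dcos0 scale0r.
have -> : 'd (fun s : R => sin s *: u) 0 1 = u.
  by rewrite (congr1 (fun F => F 1) (diffZl u dsin)) /= dsin0 scale1r.
by rewrite add0r.
Qed.
End DirectionalBounds.

Section RotationToE1.
Variables (R : realType) (n : nat).
Hypothesis n_gt0 : (0 < n)%N.
Local Notation e1 := (basis_e1 R n).
Variable x : 'rV[R]_n.
Hypotheses (x_gt0 : 0 < enorm x) (theta_gt0 : 0 < theta_e1 x) (theta_ltpi : theta_e1 x < pi).

(* [u] is [x] rotated by a right angle, towards [- e1], in the plane of [x] and [e1]. *)
Lemma exists_rotation_e1 : exists u : 'rV[R]_n, enorm u = enorm x /\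
  forall s, 0 <= theta_e1 x + s -> theta_e1 x + s <= pi ->
    enorm (cos s *: x + sin s *: u) = enorm x /\
    theta_e1 (cos s *: x + sin s *: u) = theta_e1 x + s.
Proof.
set th := theta_e1 x; set r := enorm x; set p := edot x e1.
have ee := edot_basis_e1 R n_gt0.
have pr : p = r * cos th by exact: edot_e1_cos.
have q0 : 0 < r * sin th by rewrite mulr_gt0 // sin_gt0_pi // theta_gt0 theta_ltpi.
set q := r * sin th in q0.
have qq : q ^+ 2 = r ^+ 2 - p ^+ 2 by rewrite /q pr exprMn sin2cos2; ring.
set y := x - p *: e1.
have ye : edot y e1 = 0 by rewrite edotBl edotZl ee mulr1 subrr.
have yy : edot y y = q ^+ 2.
  by rewrite qq {1}/y edotBl edotZl (edotC e1) ye mulr0 subr0 edotBr edotZr -enorm_sqr.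
set u := (- q) *: e1 + (p / q) *: y.
have ue : edot u e1 = - q by rewrite edotDl !edotZl ee ye; ring.
have uy : edot u y = p * q.
  by rewrite edotDl !edotZl (edotC e1) ye yy; field; rewrite gt_eqF.
have ux : edot u x = 0.
  have -> : x = y + p *: e1 by rewrite /y subrK.
  by rewrite edotDr edotZr uy ue; ring.
have uu : edot u u = r ^+ 2.
  rewrite {2}/u edotDr !edotZr ue uy.
  have -> : r ^+ 2 = q ^+ 2 + p ^+ 2 by rewrite qq; ring.
  by field; rewrite gt_eqF.
have norm_r (v : 'rV[R]_n) : edot v v = r ^+ 2 -> enorm v = r.
  by move=> vv; rewrite /enorm vv sqrtr_sqr gtr0_norm.
exists u; split; first exact: norm_r.
move=> s ths0 thspi; set c := cos s *: x + sin s *: u.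
have cc : enorm c = r.
  apply: norm_r; rewrite !edotDl !edotDr !edotZl !edotZr -enorm_sqr uu (edotC x u) ux.
  by rewrite -/r -[RHS]mulr1 -(cos2Dsin2 s); ring.
split => //; rewrite /theta_e1 cc.
have -> : edot c e1 = r * cos (th + s).
  by rewrite edotDl !edotZl ue -/p pr cosD /q; ring.
by rewrite mulrAC divff ?mul1r ?gt_eqF // cosK // in_itv /= ths0.
Qed.
End RotationToE1.

Section LossGradient.
Variables (R : realType) (d n : nat).
Local Notation L := (@Lpaper R d n).
Local Notation cosG t := (cos (iter d (@gpaper R) t)).
Local Open Scope classical_set_scope.

Lemma theta_e1Z s (x : 'rV[R]_n) : 0 < s -> theta_e1 (s *: x) = theta_e1 x.
Proof.
move=> s0; rewrite /theta_e1 edotZl enormZ ?ltW //.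
by rewrite invfM mulrACA divff ?mul1r // gt_eqF.
Qed.

Lemma LpaperZ s (x : 'rV[R]_n) : 0 < s ->
  L (s *: x) = 2^-1 * (s * enorm x) ^+ 2 - s * enorm x * cosG (theta_e1 x) + 2^-1.
Proof. by move=> s0; rewrite /Lpaper theta_e1Z // enormZ // ltW. Qed.

Lemma grad_ge_radial (x : 'rV[R]_n) : differentiable L x -> 0 < enorm x ->
  `|enorm x - cosG (theta_e1 x)| <= enorm (gradient_vec L x).
Proof.
move=> dL r0; set r := enorm x; set K := cosG _; set g := enorm _.
have g0 : 0 <= g by exact: enorm_ge0.
(* Moving along the ray through [x] leaves the angle, hence [K], unchanged. *)
have ray_quotient s : 0 < 1 + s ->
    L ((1 + s) *: x) - L x = s * (r * (r - K) + s * r ^+ 2 / 2).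
  by move=> s0; rewrite LpaperZ // /Lpaper -/r -/K; field.
have out : r * (r - K) <= 'd L x x.
  apply: diff_ge_right_quotient => //; near=> h.
  have h0 : 0 < h by near: h; exact: nbhs_right_gt.
  have -> : h *: x + x = (1 + h) *: x by rewrite scalerDl scale1r addrC.
  rewrite ray_quotient; last lra.
  rewrite mulKf ?gt_eqF //.
  have : 0 <= h * r ^+ 2 / 2 by rewrite divr_ge0 // mulr_ge0 ?sqr_ge0 // ltW.
  lra.
have in_ : r * (K - r) <= 'd L x (- x).
  apply: diff_ge_right_quotient => //; near=> h.
  have h0 : 0 < h by near: h; exact: nbhs_right_gt.
  have h1 : h < 1 by near: h; exact: nbhs_right_lt.
  have -> : h *: - x + x = (1 + - h) *: x by rewrite scalerDl scale1r scaleNr scalerN addrC.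
  rewrite ray_quotient; last lra.
  rewrite mulNr mulrN mulKf ?gt_eqF //.
  have : 0 <= h * r ^+ 2 / 2 by rewrite divr_ge0 // mulr_ge0 ?sqr_ge0 // ltW.
  lra.
have out' := le_trans out (diff_le_gradient _ _ _).
have in' := le_trans in_ (diff_le_gradient _ _ _).
rewrite enormN -/r -/g in in'; rewrite -/r -/g in out'.
by rewrite ler_norml; apply/andP; split; rewrite -(ler_pM2l r0) -/r; lra.
Unshelve. all: by end_near.
Qed.

Lemma grad_ge_angular (x : 'rV[R]_n) k dl : (0 < n)%N ->
  differentiable L x -> 0 < enorm x -> 0 < theta_e1 x -> theta_e1 x < pi ->
  0 < dl -> theta_e1 x + dl <= pi ->
  (forall s, 0 < s -> s <= dl -> k * s <= cosG (theta_e1 x) - cosG (theta_e1 x + s)) ->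
  k <= enorm (gradient_vec L x).
Proof.
move=> n0 dL r0 th0 thpi dl0 thdl k_le.
have [u [ur rot]] := exists_rotation_e1 n0 r0 th0 thpi.
set th := theta_e1 x in th0 thpi thdl k_le rot; set r := enorm x in r0 ur rot.
pose c := (fun s : R => cos s *: x) + (fun s : R => sin s *: u).
have [dc dc1] := rotation_curve_diff x u.
have c0x : c 0 = x by rewrite /c /GRing.add /= cos0 sin0 scale1r scale0r addr0.
have L_c s : 0 <= s -> s <= dl -> L (c s) = 2^-1 * r ^+ 2 - r * cosG (th + s) + 2^-1.
  move=> s0 sdl; have [cs_r cs_th] := rot s (ltac:(lra)) (ltac:(lra)).
  by rewrite /Lpaper -/(c s) in cs_r cs_th *; rewrite cs_r cs_th.
have dLc0 : differentiable L (c 0) by rewrite c0x.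
have chain : 'd (L \o c) 0 1 = 'd L x u.
  have := congr1 (fun F => F 1) (diff_comp dc dLc0); rewrite /= => ->.
  by rewrite dc1 -/c c0x.
have : r * k <= 'd (L \o c) 0 1.
  apply: diff_ge_right_quotient; first exact: differentiable_comp.
  near=> h; have h0 : 0 < h by near: h; exact: nbhs_right_gt.
  have hdl : h <= dl by near: h; exact: nbhs_right_le.
  rewrite /= [h *: 1]mulr1 addr0 !L_c ?addr0; try lra.
  have := k_le h h0 hdl; set A := cosG th; set B := cosG _ => k_AB.
  have -> : 2^-1 * r ^+ 2 - r * B + 2^-1 - (2^-1 * r ^+ 2 - r * A + 2^-1) = r * (A - B).
    by ring.
  by rewrite mulrCA ler_pM2l // ler_pdivlMl // mulrC.
rewrite chain => /le_trans/(_ (diff_le_gradient _ _ _)).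
by rewrite ur -/r [_ * r]mulrC ler_pM2l.
Unshelve. all: by end_near.
Qed.
End LossGradient.

Lemma dist_ge_quarter (R : realFieldType) (r c K s l : R) : 0 < l ->
  l ^+ 2 <= (r - c) ^+ 2 + s -> s <= l ^+ 2 / 4 -> `|K - c| <= l / 4 ->
  l / 4 <= `|r - K|.
Proof.
move=> l0 dist s_small Kc; have rc : l / 2 <= `|r - c|.
  rewrite leNgt; apply/negP => rc_lt.
  have : `|r - c| ^+ 2 < (l / 2) ^+ 2 by rewrite ltrXn2r ?normr_ge0.
  have : 0 < l ^+ 2 by rewrite exprn_gt0.
  by rewrite real_normK ?num_real // expr_div_n; lra.
have := ler_distD K r c; rewrite (distrC r K); lra.
Qed.

Section GradientCases.
Variables (R : realType) (d n : nat).
Hypothesis n_gt0 : (0 < n)%N.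
Local Notation L := (@Lpaper R d.+1 n).
Local Notation cosG t := (cos (iter d.+1 (@gpaper R) t)).
Local Notation e1 := (basis_e1 R n).
Implicit Types (x : 'rV[R]_n) (l eta dl : R).

Lemma grad_ge1_far x : differentiable L x -> 2 <= enorm x -> 1 <= enorm (gradient_vec L x).
Proof.
move=> dL r2; apply: le_trans (grad_ge_radial dL (ltac:(lra) : 0 < enorm x)).
by have := cos_le1 (iter d.+1 (@gpaper R) (theta_e1 x)); rewrite ler_normr; lra.
Qed.

Lemma grad_ge_near_e1 x l eta : 0 < l -> l <= 1 -> 16 * eta <= l ^+ 2 ->
  differentiable L x -> 0 < enorm x -> enorm x <= 2 ->
  theta_e1 x <= eta -> l <= enorm (x - e1) -> l / 4 <= enorm (gradient_vec L x).
Proof.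
move=> l0 l1 eta_l dL r0 r2 th_eta l_dist; apply: le_trans (grad_ge_radial dL r0).
have := enorm_subZ_e1_sqr n_gt0 r0 1; rewrite scale1r => dist2.
have l2 : l ^+ 2 <= enorm (x - e1) ^+ 2.
  by rewrite !expr2; apply: ler_pM; rewrite ?(ltW l0).
have th0 := theta_e1_ge0 n_gt0 r0; have thpi := theta_e1_lepi n_gt0 r0.
set r := enorm x in r0 r2 l_dist dist2 *; set th := theta_e1 x in th0 thpi th_eta dist2 *.
have cos_th : 1 - cos th <= eta by have := cos_sub_le th0; rewrite cos0; lra.
have cos_th0 : 0 <= 1 - cos th by rewrite subr_ge0 cos_le1.
have [Gth0 Gth] := iter_gpaper_range d.+1 th0 thpi.
have K_ge : cos th <= cosG th by apply: cos_nincr.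
have K_le := cos_le1 (iter d.+1 (@gpaper R) th).
apply: (dist_ge_quarter (c := 1) (s := 2 * (r * (1 - cos th)))) => //.
- lra.
- have : r * (1 - cos th) <= 2 * eta by apply: ler_pM; lra.
  lra.
- have : l ^+ 2 <= l * 1 by rewrite expr2; apply: ler_pM; lra.
  by rewrite ler_norml; lra.
Qed.

Lemma grad_ge_near_antipode x l eta dl : 0 < l -> l <= 1 ->
  0 < eta -> 16 * eta <= l ^+ 2 -> dl <= eta ->
  (sin (gpaper (iter d (@gpaper R) eta)))^-1 ^+ d * dl <= l / 4 ->
  differentiable L x -> 0 < enorm x -> enorm x <= 2 -> pi - dl <= theta_e1 x ->
  l <= enorm (x - (- cosG pi) *: e1) -> l / 4 <= enorm (gradient_vec L x).
Proof.
move=> l0 l1 eta0 eta_l dl_eta dl_lip dL r0 r2 th_dl l_dist.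
apply: le_trans (grad_ge_radial dL r0).
have l2 : l ^+ 2 <= enorm (x - (- cosG pi) *: e1) ^+ 2.
  by rewrite !expr2; apply: ler_pM; rewrite ?(ltW l0).
have dist2 := enorm_subZ_e1_sqr n_gt0 r0 (- cosG pi).
have th0 := theta_e1_ge0 n_gt0 r0; have thpi := theta_e1_lepi n_gt0 r0.
set r := enorm x in r0 r2 dist2 *; set th := theta_e1 x in th0 thpi th_dl dist2 *.
set K0 := cosG pi in l2 dist2 *.
have pi2 := @pi_ge2 R; have pi0 : 0 <= pi :> R by lra.
have eta_th : eta <= th.
  have : l ^+ 2 <= 1 * 1 by rewrite expr2; apply: ler_pM; lra.
  lra.
have K0_ge0 : 0 <= K0.
  have [? _] := iter_gpaper_range d.+1 pi0 (lexx pi).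
  have := iter_gpaper_le_pihalf (ltn0Sn d) pi0 (lexx pi).
  by move=> ?; apply: cos_ge0_pihalf; apply/andP; split; lra.
have K0_le1 : K0 <= 1 by exact: cos_le1.
have K0_le_K : K0 <= cosG th.
  have [Gth0 _] := iter_gpaper_range d.+1 th0 thpi.
  have [_ Gpi] := iter_gpaper_range d.+1 pi0 (lexx pi).
  by apply: cos_nincr => //; apply: iter_gpaper_ndecr.
have eta_pi : eta <= pi by lra.
have K_sub_K0 : cosG th - K0 <= l / 4.
  have M0 : 0 <= (sin (gpaper (iter d (@gpaper R) eta)))^-1 ^+ d.
    have [_ m_eta] := iter_gpaper_range d (ltW eta0) eta_pi.
    have m_pi : iter d (@gpaper R) eta <= pi by lra.
    have := sin_gpaper_gt0 (iter_gpaper_gt0 d eta0 eta_pi) m_pi.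
    by move=> /ltW; rewrite -invr_ge0 => /exprn_ge0.
  apply: le_trans (cos_iter_gpaper_sub_le d eta0 eta_pi eta_th thpi (lexx pi)) _.
  by apply: le_trans dl_lip; rewrite ler_wpM2l //; lra.
have cos_th : 1 + cos th <= pi - th by have := cos_sub_le thpi; rewrite cospi; lra.
have cos_th0 : 0 <= 1 + cos th by have := cos_geN1 th; lra.
have rK0 : r * K0 <= 2 * 1 by apply: ler_pM; lra.
have s_le : r * K0 * (1 + cos th) <= 2 * dl.
  by apply: ler_pM; rewrite ?mulr_ge0 //; lra.
apply: (dist_ge_quarter (c := K0) (s := 2 * (r * K0 * (1 + cos th)))) => //; try lra.
by rewrite ger0_norm ?subr_ge0.
Qed.

Lemma grad_ge_middle x eta dl : 0 < eta -> eta <= pi -> 0 < dl ->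
  differentiable L x -> 0 < enorm x -> eta < theta_e1 x -> theta_e1 x < pi - dl ->
  cosg_rate (iter d (@gpaper R) eta) (pi - dl / 2) ^+ d.+1 <= enorm (gradient_vec L x).
Proof.
move=> eta0 eta_pi dl0 dL r0 eta_th th_dl; have pi2 := @pi_ge2 R.
apply: (grad_ge_angular (dl := dl / 2)) => //; try lra.
move=> s s0 s_dl.
have := cos_iter_gpaper_sub_ge d eta0 eta_pi (bb := pi - dl / 2) (t := theta_e1 x) (t' := theta_e1 x + s).
by rewrite [_ + s - _]addrC addKr; apply; lra.
Qed.

Lemma grad_ge_min x l eta dl : 0 < l -> l <= 1 ->
  0 < eta -> 16 * eta <= l ^+ 2 -> 0 < dl -> dl <= eta ->
  (sin (gpaper (iter d (@gpaper R) eta)))^-1 ^+ d * dl <= l / 4 ->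
  differentiable L x -> l <= enorm x -> l <= enorm (x - e1) ->
  l <= enorm (x - (- cosG pi) *: e1) ->
  Num.min (Num.min 1 (l / 4)) (cosg_rate (iter d (@gpaper R) eta) (pi - dl / 2) ^+ d.+1)
    <= enorm (gradient_vec L x).
Proof.
move=> l0 l1 eta0 eta_l dl0 dl_eta dl_lip dL l_r l_e1 l_K0.
have r0 : 0 < enorm x by lra.
have eta_pi : eta <= pi.
  have : l ^+ 2 <= 1 * 1 by rewrite expr2; apply: ler_pM; lra.
  by have := @pi_ge2 R; lra.
rewrite !ge_min.
have [r2|r2] := lerP 2 (enorm x); first by rewrite grad_ge1_far.
have [th_eta|eta_th] := lerP (theta_e1 x) eta.
  by rewrite (grad_ge_near_e1 l0 l1 eta_l dL r0 (ltW r2) th_eta l_e1) orbT.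
have [dl_th|th_dl] := lerP (pi - dl) (theta_e1 x).
  by rewrite (grad_ge_near_antipode l0 l1 eta0 eta_l dl_eta dl_lip dL r0 (ltW r2)) ?orbT.
by rewrite (grad_ge_middle eta0 eta_pi dl0 dL r0 eta_th th_dl) orbT.
Qed.
End GradientCases.

Theorem mainTheorem5 (R : realType) (d : nat) (hd : (1 <= d)%N) (l : R) (hl : 0 < l) :
  exists C : R, 0 < C /\
    forall (n : nat) (x : 'rV[R]_n),
      l <= enorm x ->
      l <= enorm (x - @basis_e1 R n) ->
      l <= enorm (x - (- cos (iter d (@gpaper R) pi)) *: @basis_e1 R n) ->
      differentiable (@Lpaper R d n) x ->
      C <= enorm (gradient_vec (@Lpaper R d n) x).
Proof.
case: d hd => [//|d] _; have pi2 := @pi_ge2 R.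
pose l' := Num.min l 1; pose eta := l' ^+ 2 / 16.
pose m := iter d (@gpaper R) eta; pose M := (sin (gpaper m))^-1.
pose dl := Num.min eta (l' / (4 * M ^+ d)).
have l'0 : 0 < l' by rewrite lt_min hl ltr01.
have [l'l l'1] : l' <= l /\ l' <= 1 by split; rewrite ge_min lexx ?orbT.
have eta0 : 0 < eta by rewrite divr_gt0 ?exprn_gt0.
have eta_l : 16 * eta <= l' ^+ 2 by rewrite mulrC divfK.
have eta_pi : eta < pi.
  have : l' ^+ 2 <= 1 * 1 by rewrite expr2; apply: ler_pM; lra.
  lra.
have [_ m_eta] : 0 <= m /\ m <= eta := iter_gpaper_range d (ltW eta0) (ltW eta_pi).
have m0 : 0 < m := iter_gpaper_gt0 d eta0 (ltW eta_pi).
have Md0 : 0 < M ^+ d by rewrite exprn_gt0 // invr_gt0 sin_gpaper_gt0 //; lra.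
have dl0 : 0 < dl by rewrite lt_min eta0 divr_gt0 // mulr_gt0.
have dl_eta : dl <= eta by rewrite ge_min lexx.
have dl_lip : M ^+ d * dl <= l' / 4.
  have dl_le : dl <= l' / (4 * M ^+ d) by rewrite ge_min lexx orbT.
  apply: le_trans (ler_wpM2l (ltW Md0) dl_le) _.
  have -> : M ^+ d * (l' / (4 * M ^+ d)) = l' / 4 by field; rewrite gt_eqF.
  by [].
exists (Num.min (Num.min 1 (l' / 4)) (cosg_rate m (pi - dl / 2) ^+ d.+1)); split.
  by rewrite !lt_min ltr01 divr_gt0 // exprn_gt0 // cosg_rate_gt0 //; lra.
move=> [|n] x x_l x_e1 x_K0 dL.
  by move: x_l; rewrite /enorm /edot big_ord0 sqrtr0; lra.
apply: (grad_ge_min (ltn0Sn n) l'0 l'1 eta0 eta_l dl0 dl_eta dl_lip dL);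
  exact: le_trans l'l _.
Qed.
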